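(* In the free model of ASD, let $(\beta^n,A_n)_{n:N}$ be a lattice basis for an object $X$, with $(n\ll m)\equiv A_n\beta^m$. Then for all $n:N$ and $\phi,\psi:\Sigma^X$: $A_n\top\Leftrightarrow(n\ll1)$, $A_n\bot\Leftrightarrow(n\ll0)$, $A_n(\phi\wedge\psi)\Leftrightarrow\exists p,q.\ (n\ll p\star q)\wedge A_p\phi\wedge A_q\psi$, $A_n(\phi\vee\psi)\Leftrightarrow\exists p,q.\ (n\ll p+q)\wedge A_p\phi\wedge A_q\psi$. In particular (Wilker property) $(n\ll p+q)\Leftrightarrow\exists p',q'.\ (n\ll p'+q')\wedge(p'\ll p)\wedge(q'\ll q)$.
   Context: ASD setting. $\mathcal S$ is a category with finite products and an object $\Sigma$ for which all exponentials $\Sigma^X$ exist; we reason in its simply typed $\lambda$-calculus (terms in a context $\Gamma$). $(\Sigma,\top,\bot,\wedge,\vee)$ is an internal distributive lattice, and each $\Sigma^X$ is a distributive lattice pointwise; the intrinsic order is $\phi\le\psi$ iff $\phi=\phi\wedge\psi$; on $\Sigma$ it is written $\Rightarrow$ and equality $\Leftrightarrow$. Phoa principle: $F\sigma\Leftrightarrow F\bot\vee(\sigma\wedge F\top)$ for $F:\Sigma^\Sigma,\sigma:\Sigma$. An object $N$ is overt discrete if it has an equality predicate $(=_N):N\times N\to\Sigma$ with $\Gamma\vdash n=m$ iff $\Gamma\vdash(n=_Nm)\Leftrightarrow\top$, and an existential quantifier $\exists_N:\Sigma^N\to\Sigma$ left adjoint to $\Sigma^{!}:\Sigma\to\Sigma^N$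 (written $\exists n.\phi n$). There is a natural numbers object $\mathbb N$, which is overt discrete. For overt discrete $N$, $\mathrm{Fin}(N)$ is the overt discrete object of finite lists over $N$, with membership $n\in\ell$ and bounded quantifiers $\exists n\in\ell$, $\forall n\in\ell$ defined by list recursion. Scott principle: for overt discrete $N$, $\Phi:\Sigma^{\Sigma^N},\xi:\Sigma^N$: $\Phi\xi\Leftrightarrow\exists\ell:\mathrm{Fin}(N).\ \Phi(\lambda n.n\in\ell)\wedge\forall n\in\ell.\xi n$. Sobriety: $P:\Sigma^{\Sigma^X}$ is prime if $\mathcal FP\Leftrightarrow P(\lambda x.\mathcal F(\lambda\phi.\phi x))$ for all $\mathcal F:\Sigma^{\Sigma^{\Sigma^X}}$; then there is a unique $a:X$ with $P=\lambda\phi.\phi a$. A nucleus is $E:\Sigma^Y\to\Sigma^Y$ with $E(\lambda y.\mathcal F(\lambda\phi.\phi y))=E(\lambda y.\mathcal F(\lambda\phi.E\phi y))$ for all $\mathcal F:\Sigma^{\Sigma^{\Sigma^Y}}$; for every nucleus there is a $\Sigma$-split subobject $i:X\to Y$, i.e. one with $I:\Sigma^X\to\Sigma^Y$, $\Sigma^i\circ I=\mathrm{id}$, and moreover $I\circ\Sigma^i=E$. The free model is the term model generated by these axioms; its objects are the definable ones. Bases. An effective basis for $X$ indexed by an overt discrete $N$ is a pair of families $n:N\vdash\beta^n:\Sigma^X$ and $n:N\vdash A_n:\Sigma^{\Sigma^X}$ with $\phi=\lambda x.\exists n.\ A_n\phi\wedge\beta^nx$ for all $\phi:\Sigma^X$.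 It is a $\vee$-basis if there are $0:N$ and $+:N\times N\to N$ with $\beta^0=\bot$, $A_0=\lambda\phi.\top$, $\beta^{n+m}=\beta^n\vee\beta^m$, $A_{n+m}=A_n\wedge A_m$; an $\wedge$-basis if there are $1:N$ and $\star:N\times N\to N$ with $\beta^1=\top$, $\beta^{n\star m}=\beta^n\wedge\beta^m$, $A_n\le A_{n\star m}$, $A_m\le A_{n\star m}$; a lattice basis if both. *)

(* A model of Abstract Stone Duality (ASD),
   presented as a category with finite products and exponentials Sigma^X,
   whose simply typed lambda-calculus is rendered via generalized elements:
   a term  Gamma |- t : Y  is a morphism  Hom Gamma Y. *)

Set Implicit Arguments.
Unset Strict Implicit.

Record CatData : Type := {
  Ob : Type;
  Hom : Ob -> Ob -> Type;
  idm : forall X : Ob, Hom X X;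
  comp : forall X Y Z : Ob, Hom Y Z -> Hom X Y -> Hom X Z;
  one : Ob;
  bang : forall X : Ob, Hom X one;
  cprod : Ob -> Ob -> Ob;
  cpair : forall G X Y : Ob, Hom G X -> Hom G Y -> Hom G (cprod X Y);
  cp1 : forall X Y : Ob, Hom (cprod X Y) X;
  cp2 : forall X Y : Ob, Hom (cprod X Y) Y;
  Sig : Ob;
  Exp : Ob -> Ob;
  ev : forall X : Ob, Hom (cprod (Exp X) X) Sig;
  lam : forall G X : Ob, Hom (cprod G X) Sig -> Hom G (Exp X);
  stop : Hom one Sig;
  sbot : Hom one Sig;
  smeet : Hom (cprod Sig Sig) Sig;
  sjoin : Hom (cprod Sig Sig) Sig
}.

Arguments Hom {c} X Y.
Arguments idm {c} X.
Arguments comp {c X Y Z} g f.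
Arguments one {c}.
Arguments bang {c} X.
Arguments cprod {c} X Y.
Arguments cpair {c G X Y} f g.
Arguments cp1 {c X Y}.
Arguments cp2 {c X Y}.
Arguments Sig {c}.
Arguments Exp {c} X.
Arguments ev {c} X.
Arguments lam {c G X} f.
Arguments stop {c}.
Arguments sbot {c}.
Arguments smeet {c}.
Arguments sjoin {c}.

Section Helpers.
Context {C : CatData}.

Definition wk {G Y X : Ob C} (t : Hom G X) : Hom (cprod G Y) X := comp t cp1.

Definition app {G X : Ob C} (f : Hom G (Exp X)) (a : Hom G X) : Hom G Sig :=
  comp (ev X) (cpair f a).

Definition topG (G : Ob C) : Hom G Sig := comp stop (bang G).
Definition botG (G : Ob C) : Hom G Sig := comp sbot (bang G).
Definition meetG {G : Ob C} (a b : Hom G Sig) : Hom G Sig := comp smeet (cpair a b).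
Definition joinG {G : Ob C} (a b : Hom G Sig) : Hom G Sig := comp sjoin (cpair a b).
Definition leS {G : Ob C} (a b : Hom G Sig) : Prop := a = meetG a b.

Definition topE (G X : Ob C) : Hom G (Exp X) := lam (topG (cprod G X)).
Definition botE (G X : Ob C) : Hom G (Exp X) := lam (botG (cprod G X)).
Definition meetE {G X : Ob C} (f g : Hom G (Exp X)) : Hom G (Exp X) :=
  lam (meetG (app (wk f) cp2) (app (wk g) cp2)).
Definition joinE {G X : Ob C} (f g : Hom G (Exp X)) : Hom G (Exp X) :=
  lam (joinG (app (wk f) cp2) (app (wk g) cp2)).
Definition leE {G X : Ob C} (f g : Hom G (Exp X)) : Prop := f = meetE f g.

Definition SigMap {X Y : Ob C} (i : Hom X Y) : Hom (Exp Y) (Exp X) :=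
  lam (app cp1 (comp i cp2)).

(* the term  lambda x. F (lambda phi. phi x)  in context D *)
Definition focusTerm {D X : Ob C} (F : Hom D (Exp (Exp (Exp X)))) : Hom D (Exp X) :=
  lam (app (wk F) (lam (app cp2 (comp cp2 cp1)))).

(* prime elements of Sigma^(Sigma^X) (the condition for all F, in any
   extended context obtained by substitution s : D -> G) *)
Definition prime {G X : Ob C} (P : Hom G (Exp (Exp X))) : Prop :=
  forall (D : Ob C) (s : Hom D G) (F : Hom D (Exp (Exp (Exp X)))),
    app F (comp P s) = app (comp P s) (focusTerm F).

Definition etaPt {G X : Ob C} (a : Hom G X) : Hom G (Exp (Exp X)) :=
  lam (app cp2 (wk a)).

Definition nucleus {Y : Ob C} (E : Hom (Exp Y) (Exp Y)) : Prop :=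
  forall (D : Ob C) (F : Hom D (Exp (Exp (Exp Y)))),
    comp E (lam (app (wk F) (lam (app cp2 (comp cp2 cp1)))))
    = comp E (lam (app (wk F) (lam (app (comp E cp2) (comp cp2 cp1))))).

Definition mono {X Y : Ob C} (i : Hom X Y) : Prop :=
  forall (G : Ob C) (f g : Hom G X), comp i f = comp i g -> f = g.

End Helpers.

Record CatLaws (C : CatData) : Prop := {
  comp_idl : forall (X Y : Ob C) (f : Hom X Y), comp (idm Y) f = f;
  comp_idr : forall (X Y : Ob C) (f : Hom X Y), comp f (idm X) = f;
  comp_assoc : forall (X Y Z W : Ob C) (h : Hom Z W) (g : Hom Y Z) (f : Hom X Y),
      comp h (comp g f) = comp (comp h g) f;
  bang_uniq : forall (X : Ob C) (f : Hom X one), f = bang X;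
  cp1_pair : forall (G X Y : Ob C) (f : Hom G X) (g : Hom G Y), comp cp1 (cpair f g) = f;
  cp2_pair : forall (G X Y : Ob C) (f : Hom G X) (g : Hom G Y), comp cp2 (cpair f g) = g;
  pair_eta : forall (G X Y : Ob C) (h : Hom G (cprod X Y)),
      cpair (comp cp1 h) (comp cp2 h) = h;
  ev_lam : forall (G X : Ob C) (f : Hom (cprod G X) Sig),
      comp (ev X) (cpair (comp (lam f) cp1) cp2) = f;
  lam_eta : forall (G X : Ob C) (h : Hom G (Exp X)),
      lam (comp (ev X) (cpair (comp h cp1) cp2)) = h;
  meet_assoc : forall (G : Ob C) (a b c : Hom G Sig), meetG a (meetG b c) = meetG (meetG a b) c;
  join_assoc : forall (G : Ob C) (a b c : Hom G Sig), joinG a (joinG b c) = joinG (joinG a b) c;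
  meet_comm : forall (G : Ob C) (a b : Hom G Sig), meetG a b = meetG b a;
  join_comm : forall (G : Ob C) (a b : Hom G Sig), joinG a b = joinG b a;
  meet_absorb : forall (G : Ob C) (a b : Hom G Sig), meetG a (joinG a b) = a;
  join_absorb : forall (G : Ob C) (a b : Hom G Sig), joinG a (meetG a b) = a;
  meet_top : forall (G : Ob C) (a : Hom G Sig), meetG a (topG G) = a;
  join_bot : forall (G : Ob C) (a : Hom G Sig), joinG a (botG G) = a;
  meet_join_distr : forall (G : Ob C) (a b c : Hom G Sig),
      meetG a (joinG b c) = joinG (meetG a b) (meetG a c);
  phoa : forall (G : Ob C) (F : Hom G (Exp Sig)) (s : Hom G Sig),
      app F s = joinG (app F (botG G)) (meetG s (app F (topG G)))
}.

Record OvertDiscrete (C : CatData) (N : Ob C) : Type := {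
  eqd : Hom (cprod N N) Sig;
  exd : Hom (Exp N) Sig;
  eqd_spec : forall (G : Ob C) (n m : Hom G N),
      n = m <-> comp eqd (cpair n m) = topG G;
  exd_adj : forall (G : Ob C) (phi : Hom G (Exp N)) (s : Hom G Sig),
      leS (comp exd phi) s <-> leE phi (lam (wk s))
}.
Arguments eqd {C N} o.
Arguments exd {C N} o.

Definition exN {C : CatData} {N G : Ob C} (o : OvertDiscrete N)
  (body : Hom (cprod G N) Sig) : Hom G Sig := comp (exd o) (lam body).

Record NNO (C : CatData) : Type := {
  Nat : Ob C;
  zero : Hom one Nat;
  succ : Hom Nat Nat;
  natrec : forall G X : Ob C, Hom G X -> Hom (cprod G X) X -> Hom (cprod G Nat) X;
  natrec_zero : forall (G X : Ob C) (g : Hom G X) (h : Hom (cprod G X) X),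
      comp (natrec g h) (cpair (idm G) (comp zero (bang G))) = g;
  natrec_succ : forall (G X : Ob C) (g : Hom G X) (h : Hom (cprod G X) X),
      comp (natrec g h) (cpair cp1 (comp succ cp2)) = comp h (cpair cp1 (natrec g h));
  natrec_uniq : forall (G X : Ob C) (g : Hom G X) (h : Hom (cprod G X) X) (r : Hom (cprod G Nat) X),
      comp r (cpair (idm G) (comp zero (bang G))) = g ->
      comp r (cpair cp1 (comp succ cp2)) = comp h (cpair cp1 r) ->
      r = natrec g h
}.
Arguments Nat {C} n.

Record ListObj (C : CatData) (N : Ob C) : Type := {
  FinN : Ob C;
  lnil : Hom one FinN;
  lcons : Hom (cprod N FinN) FinN;
  lrec : forall G X : Ob C, Hom G X -> Hom (cprod (cprod G N) X) X -> Hom (cprod G FinN) X;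
  lrec_nil : forall (G X : Ob C) (g : Hom G X) (h : Hom (cprod (cprod G N) X) X),
      comp (lrec g h) (cpair (idm G) (comp lnil (bang G))) = g;
  lrec_cons : forall (G X : Ob C) (g : Hom G X) (h : Hom (cprod (cprod G N) X) X),
      comp (lrec g h) (cpair (comp cp1 cp1) (comp lcons (cpair (comp cp2 cp1) cp2)))
      = comp h (cpair cp1 (comp (lrec g h) (cpair (comp cp1 cp1) cp2)));
  lrec_uniq : forall (G X : Ob C) (g : Hom G X) (h : Hom (cprod (cprod G N) X) X) (r : Hom (cprod G FinN) X),
      comp r (cpair (idm G) (comp lnil (bang G))) = g ->
      comp r (cpair (comp cp1 cp1) (comp lcons (cpair (comp cp2 cp1) cp2)))
        = comp h (cpair cp1 (comp r (cpair (comp cp1 cp1) cp2))) ->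
      r = lrec g h
}.
Arguments FinN {C N} l.
Arguments lrec {C N} l {G X} g h.

(* membership  n \in l  defined by list recursion:
   n \in nil = bot,  n \in (m :: l) = (n = m) \/ (n \in l) *)
Definition memb {C : CatData} {N : Ob C} (o : OvertDiscrete N) (L : ListObj N)
  : Hom (cprod N (FinN L)) Sig :=
  lrec L (G:=N) (X:=Sig) (botG N)
    (joinG (comp (eqd o) (cpair (comp cp1 cp1) (comp cp2 cp1))) cp2).

(* bounded universal quantifier  forall n \in l. xi n,  by list recursion:
   nil |-> top,  (m :: l) |-> xi m /\ forall n \in l. xi n *)
Definition allIn {C : CatData} {N : Ob C} (L : ListObj N)
  : Hom (cprod (Exp N) (FinN L)) Sig :=
  lrec L (G:=Exp N) (X:=Sig) (topG (Exp N))
    (meetG (app (comp cp1 cp1) (comp cp2 cp1)) cp2).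

Record ASDModel : Type := {
  cat : CatData;
  cat_laws : CatLaws cat;
  natobj : NNO cat;
  nat_od : OvertDiscrete (Nat natobj);
  fin : forall (N : Ob cat), OvertDiscrete N -> ListObj N;
  fin_od : forall (N : Ob cat) (o : OvertDiscrete N), OvertDiscrete (FinN (fin o));
  scott : forall (N : Ob cat) (o : OvertDiscrete N) (G : Ob cat)
      (Phi : Hom G (Exp (Exp N))) (xi : Hom G (Exp N)),
      app Phi xi =
      exN (fin_od o)
        (meetG (app (wk Phi) (lam (comp (memb o (fin o)) (cpair cp2 (comp cp2 cp1)))))
               (comp (allIn (fin o)) (cpair (wk xi) cp2)));
  sober : forall (X G : Ob cat) (P : Hom G (Exp (Exp X))),
      prime P -> exists! a : Hom G X, P = etaPt a;
  nucleus_split : forall (Y : Ob cat) (E : Hom (Exp Y) (Exp Y)),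
      nucleus E ->
      exists (X : Ob cat) (i : Hom X Y) (I : Hom (Exp X) (Exp Y)),
        mono i /\ comp (SigMap i) I = idm (Exp X) /\ comp I (SigMap i) = E
}.

Section Bases.
Context {C : CatData} {X N : Ob C} (o : OvertDiscrete N)
        (beta : Hom N (Exp X)) (A : Hom N (Exp (Exp X))).

Definition Aapp {G : Ob C} (n : Hom G N) (phi : Hom G (Exp X)) : Hom G Sig :=
  app (comp A n) phi.

Definition wb {G : Ob C} (n m : Hom G N) : Hom G Sig := Aapp n (comp beta m).

(* effective basis: phi = lambda x. exists n. A_n phi /\ beta^n x *)
Definition effective_basis : Prop :=
  forall (G : Ob C) (phi : Hom G (Exp X)),
    phi = lam (exN o (meetG (app (comp A cp2) (comp phi (comp cp1 cp1)))
                            (app (comp beta cp2) (comp cp2 cp1)))).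

Definition join_basis (z : Hom one N) (pl : Hom (cprod N N) N) : Prop :=
  effective_basis /\
  comp beta z = botE one X /\
  comp A z = topE one (Exp X) /\
  (forall (G : Ob C) (n m : Hom G N),
      comp beta (comp pl (cpair n m)) = joinE (comp beta n) (comp beta m)) /\
  (forall (G : Ob C) (n m : Hom G N),
      comp A (comp pl (cpair n m)) = meetE (comp A n) (comp A m)).

Definition meet_basis (u : Hom one N) (st : Hom (cprod N N) N) : Prop :=
  effective_basis /\
  comp beta u = topE one X /\
  (forall (G : Ob C) (n m : Hom G N),
      comp beta (comp st (cpair n m)) = meetE (comp beta n) (comp beta m)) /\
  (forall (G : Ob C) (n m : Hom G N),
      leE (comp A n) (comp A (comp st (cpair n m)))) /\
  (forall (G : Ob C) (n m : Hom G N),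
      leE (comp A m) (comp A (comp st (cpair n m)))).

Definition lattice_basis (z : Hom one N) (pl : Hom (cprod N N) N)
  (u : Hom one N) (st : Hom (cprod N N) N) : Prop :=
  join_basis z pl /\ meet_basis u st.

End Bases.

(** The key fact is the basis expansion
      [Phi phi = exists n. Phi beta^n /\ A_n phi]
    for every [Phi : Sigma^(Sigma^X)] and [phi : Sigma^X]. For "<=", write
    [phi = lambda x. exists n. A_n phi /\ beta^n x] and apply the Scott principle
    to [xi := lambda n. A_n phi]: [Phi phi] becomes a join over finite lists [l]
    of [Phi (lambda x. exists n in l. beta^n x) /\ forall n in l. A_n phi], and
    for a [\/]-basis both conjuncts only depend on the list sum [m] of [l], being
    [Phi beta^m] and [A_m phi]. For ">=", strength (a consequence of the Phoa
    principle) gives [Phi beta^n /\ A_n phi <= Phi (A_n phi /\ beta^n) <= Phi phi].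
    Expanding [A_n (phi op psi)] first in [phi] and then in [psi] yields the
    decompositions, since [beta^p \/ beta^q = beta^(p + q)] and
    [beta^p /\ beta^q = beta^(p * q)]; the Wilker property is the join case at
    [phi, psi := beta^p, beta^q].
    Summing over a list needs the one-point rule [exists m. (m = n) /\ th m = th n].
    It comes from the nucleus [phi |-> (p = m) /\ phi]: its Sigma-split
    subobject lies in the diagonal, and the nucleus identifies predicates that
    agree on that subobject. *)

From Stdlib Require Import Setoid.

Set Implicit Arguments.
Unset Strict Implicit.

Section TermCalculus.
Variable C : CatData.
Hypothesis L : CatLaws C.

Lemma comp_assocr (X Y Z W : Ob C) (h : Hom Z W) (g : Hom Y Z) (f : Hom X Y) :
  comp (comp h g) f = comp h (comp g f).
Proof. symmetry; apply (comp_assoc L). Qed.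

Lemma cp1_pair_comp (D G X Y : Ob C) (f : Hom G X) (g : Hom G Y) (h : Hom D G) :
  comp cp1 (comp (cpair f g) h) = comp f h.
Proof. rewrite (comp_assoc L), (cp1_pair L); reflexivity. Qed.

Lemma cp2_pair_comp (D G X Y : Ob C) (f : Hom G X) (g : Hom G Y) (h : Hom D G) :
  comp cp2 (comp (cpair f g) h) = comp g h.
Proof. rewrite (comp_assoc L), (cp2_pair L); reflexivity. Qed.

Lemma pair_comp (D G X Y : Ob C) (f : Hom G X) (g : Hom G Y) (h : Hom D G) :
  comp (cpair f g) h = cpair (comp f h) (comp g h).
Proof.
  rewrite <- (pair_eta L (comp (cpair f g) h)), cp1_pair_comp, cp2_pair_comp.
  reflexivity.
Qed.

Lemma pair_cp1_cp2 (X Y : Ob C) : cpair (@cp1 C X Y) cp2 = idm _.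
Proof. rewrite <- (pair_eta L (idm _)), !(comp_idr L); reflexivity. Qed.

Lemma bang_comp (G D : Ob C) (s : Hom D G) : comp (bang G) s = bang D.
Proof. apply (bang_uniq L). Qed.

Lemma app_comp (D G X : Ob C) (f : Hom G (Exp X)) (a : Hom G X) (s : Hom D G) :
  comp (app f a) s = app (comp f s) (comp a s).
Proof. unfold app; rewrite comp_assocr, pair_comp; reflexivity. Qed.

Lemma meetG_comp (D G : Ob C) (a b : Hom G Sig) (s : Hom D G) :
  comp (meetG a b) s = meetG (comp a s) (comp b s).
Proof. unfold meetG; rewrite comp_assocr, pair_comp; reflexivity. Qed.

Lemma joinG_comp (D G : Ob C) (a b : Hom G Sig) (s : Hom D G) :
  comp (joinG a b) s = joinG (comp a s) (comp b s).
Proof. unfold joinG; rewrite comp_assocr, pair_comp; reflexivity. Qed.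

Lemma topG_comp (D G : Ob C) (s : Hom D G) : comp (topG G) s = topG D.
Proof. unfold topG; rewrite comp_assocr, bang_comp; reflexivity. Qed.

Lemma botG_comp (D G : Ob C) (s : Hom D G) : comp (botG G) s = botG D.
Proof. unfold botG; rewrite comp_assocr, bang_comp; reflexivity. Qed.

Lemma lam_comp (D G X : Ob C) (f : Hom (cprod G X) Sig) (s : Hom D G) :
  comp (lam f) s = lam (comp f (cpair (comp s cp1) cp2)).
Proof.
  rewrite <- (lam_eta L (comp (lam f) s)); f_equal.
  rewrite <- (ev_lam L f) at 2.
  rewrite !comp_assocr, pair_comp, !comp_assocr, (cp1_pair L), (cp2_pair L).
  reflexivity.
Qed.

Lemma app_lam (G X : Ob C) (f : Hom (cprod G X) Sig) (a : Hom G X) :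
  app (lam f) a = comp f (cpair (idm G) a).
Proof.
  unfold app; rewrite <- (ev_lam L f) at 2.
  rewrite comp_assocr, pair_comp, comp_assocr, (cp1_pair L), (cp2_pair L), (comp_idr L).
  reflexivity.
Qed.

Lemma lam_inj (G X : Ob C) (f g : Hom (cprod G X) Sig) : lam f = lam g -> f = g.
Proof. intro E; rewrite <- (ev_lam L f), <- (ev_lam L g), E; reflexivity. Qed.

Lemma lam_app_eta (G X : Ob C) (h : Hom G (Exp X)) : lam (app (comp h cp1) cp2) = h.
Proof. apply (lam_eta L). Qed.

Lemma exN_comp (N : Ob C) (o : OvertDiscrete N) (D G : Ob C)
  (b : Hom (cprod G N) Sig) (s : Hom D G) :
  comp (exN o b) s = exN o (comp b (cpair (comp s cp1) cp2)).
Proof. unfold exN; rewrite comp_assocr, lam_comp; reflexivity. Qed.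

End TermCalculus.

Ltac term_simpl L :=
  repeat rewrite ?(comp_assocr L), ?(cp1_pair L), ?(cp2_pair L),
    ?(cp1_pair_comp L), ?(cp2_pair_comp L), ?(pair_comp L), ?(comp_idl L),
    ?(comp_idr L), ?(pair_cp1_cp2 L), ?(pair_eta L), ?(bang_comp L),
    ?(app_comp L), ?(meetG_comp L), ?(joinG_comp L), ?(topG_comp L),
    ?(botG_comp L), ?(lam_comp L), ?(app_lam L), ?(exN_comp L).

Section Lattice.
Variable C : CatData.
Hypothesis L : CatLaws C.
Variable G : Ob C.
Implicit Types a b c d : Hom G Sig.

Lemma meetI a : meetG a a = a.
Proof. rewrite <- (join_absorb L a a) at 2; apply (meet_absorb L). Qed.

Lemma leS_joinE a b : leS a b <-> joinG a b = b.
Proof.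
  unfold leS; split; intro H.
  - rewrite H, (join_comm L), (meet_comm L); apply (join_absorb L).
  - rewrite <- H; symmetry; apply (meet_absorb L).
Qed.

Lemma leS_refl a : leS a a.
Proof. unfold leS; rewrite meetI; reflexivity. Qed.

Lemma leS_trans a b c : leS a b -> leS b c -> leS a c.
Proof.
  unfold leS; intros Hab Hbc.
  rewrite Hab at 2; rewrite <- (meet_assoc L), <- Hbc; exact Hab.
Qed.

Lemma leS_antisym a b : leS a b -> leS b a -> a = b.
Proof.
  unfold leS; intros Hab Hba.
  rewrite Hab at 1; rewrite (meet_comm L); symmetry; exact Hba.
Qed.

Lemma meet_leS_l a b : leS (meetG a b) a.
Proof.
  unfold leS; rewrite <- (meet_assoc L), (meet_comm L b a), (meet_assoc L), meetI.
  reflexivity.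
Qed.

Lemma meet_leS_r a b : leS (meetG a b) b.
Proof. rewrite (meet_comm L); apply meet_leS_l. Qed.

Lemma leS_meet a b c : leS c a -> leS c b -> leS c (meetG a b).
Proof. unfold leS; intros Hca Hcb; rewrite (meet_assoc L), <- Hca; exact Hcb. Qed.

Lemma join_leS_l a b : leS a (joinG a b).
Proof. unfold leS; rewrite (meet_absorb L); reflexivity. Qed.

Lemma join_leS_r a b : leS b (joinG a b).
Proof. rewrite (join_comm L); apply join_leS_l. Qed.

Lemma join_leS a b c : leS a c -> leS b c -> leS (joinG a b) c.
Proof. rewrite !leS_joinE; intros Hac Hbc; rewrite <- (join_assoc L), Hbc; exact Hac. Qed.

Lemma bot_leS a : leS (botG G) a.
Proof. apply leS_joinE; rewrite (join_comm L); apply (join_bot L). Qed.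

Lemma meet_leS_mono a b c d : leS a b -> leS c d -> leS (meetG a c) (meetG b d).
Proof.
  intros Hab Hcd; apply leS_meet.
  - eapply leS_trans; [apply meet_leS_l | exact Hab].
  - eapply leS_trans; [apply meet_leS_r | exact Hcd].
Qed.

Lemma join_leS_mono a b c d : leS a b -> leS c d -> leS (joinG a c) (joinG b d).
Proof.
  intros Hab Hcd; apply join_leS.
  - eapply leS_trans; [exact Hab | apply join_leS_l].
  - eapply leS_trans; [exact Hcd | apply join_leS_r].
Qed.

Lemma top_meet a : meetG (topG G) a = a.
Proof. rewrite (meet_comm L); apply (meet_top L). Qed.

Lemma bot_meet a : meetG (botG G) a = botG G.
Proof. symmetry; apply bot_leS. Qed.

Lemma meet_join_distr_r a b c : meetG (joinG b c) a = joinG (meetG b a) (meetG c a).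
Proof. rewrite !(meet_comm L _ a); apply (meet_join_distr L). Qed.

End Lattice.

Section Phoa.
Variable C : CatData.
Hypothesis L : CatLaws C.

Lemma leS_comp (D G : Ob C) (a b : Hom G Sig) (t : Hom D G) :
  leS a b -> leS (comp a t) (comp b t).
Proof. unfold leS; intro H; rewrite H at 1; apply (meetG_comp L). Qed.

Lemma app_Sig_mono (G : Ob C) (F : Hom G (Exp Sig)) (a b : Hom G Sig) :
  leS a b -> leS (app F a) (app F b).
Proof.
  intro H; rewrite (phoa L F a), (phoa L F b).
  apply (join_leS_mono L); [apply (leS_refl L) |].
  apply (meet_leS_mono L); [exact H | apply (leS_refl L)].
Qed.

Lemma phoa_strength (G : Ob C) (F : Hom G (Exp Sig)) (s : Hom G Sig) :
  meetG s (app F s) = meetG s (app F (topG G)).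
Proof.
  assert (F_bot_top : leS (app F (botG G)) (app F (topG G)))
    by apply app_Sig_mono, (bot_leS L).
  apply (leS_joinE L) in F_bot_top.
  rewrite (phoa L F s), (meet_join_distr L), (meet_assoc L), (meetI L),
    <- (meet_join_distr L), F_bot_top.
  reflexivity.
Qed.

Lemma leE_app (G X : Ob C) (f g : Hom G (Exp X)) :
  leE f g <-> leS (app (comp f cp1) cp2) (app (comp g cp1) cp2).
Proof.
  unfold leE, meetE, leS, wk; split; intro H.
  - apply (lam_inj L); rewrite (lam_app_eta L); exact H.
  - rewrite <- H; symmetry; apply (lam_app_eta L).
Qed.

(* Apply monotonicity of [sigma |-> Phi (f \/ (sigma /\ g))] to [bot <= top]. *)
Lemma app_mono (G X : Ob C) (Phi : Hom G (Exp (Exp X))) (f g : Hom G (Exp X)) :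
  leE f g -> leS (app Phi f) (app Phi g).
Proof.
  intro Hfg; apply leE_app, (leS_joinE L) in Hfg.
  pose (F := lam (app (comp Phi cp1)
               (lam (joinG (app (comp f (comp cp1 cp1)) cp2)
                           (meetG (comp cp2 cp1) (app (comp g (comp cp1 cp1)) cp2)))))).
  assert (F_bot : app F (botG G) = app Phi f).
  { unfold F; term_simpl L; rewrite (bot_meet L), (join_bot L), (lam_app_eta L).
    reflexivity. }
  assert (F_top : app F (topG G) = app Phi g).
  { unfold F; term_simpl L; rewrite (top_meet L), Hfg, (lam_app_eta L).
    reflexivity. }
  rewrite <- F_bot, <- F_top; apply app_Sig_mono, (bot_leS L).
Qed.

(* Strength applied to [sigma |-> Phi (sigma /\ th)]. *)
Lemma meet_app_leS (G X : Ob C) (Phi : Hom G (Exp (Exp X))) (th : Hom G (Exp X))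
  (s : Hom G Sig) :
  leS (meetG s (app Phi th)) (app Phi (lam (meetG (comp s cp1) (app (comp th cp1) cp2)))).
Proof.
  pose (F := lam (app (comp Phi cp1)
               (lam (meetG (comp cp2 cp1) (app (comp th (comp cp1 cp1)) cp2))))).
  assert (F_top : app F (topG G) = app Phi th).
  { unfold F; term_simpl L; rewrite (top_meet L), (lam_app_eta L); reflexivity. }
  assert (F_s : app F s = app Phi (lam (meetG (comp s cp1) (app (comp th cp1) cp2)))).
  { unfold F; term_simpl L; reflexivity. }
  rewrite <- F_top, <- F_s, <- phoa_strength; apply (meet_leS_r L).
Qed.

End Phoa.

Section Exists.
Variable C : CatData.
Hypothesis L : CatLaws C.
Variables (N : Ob C) (o : OvertDiscrete N).

Lemma leS_exN_wk (G : Ob C) (b : Hom (cprod G N) Sig) : leS b (comp (exN o b) cp1).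
Proof.
  assert (H : leS (comp (exd o) (lam b)) (exN o b)) by apply (leS_refl L).
  apply (exd_adj o), (leE_app L) in H; revert H; unfold wk; term_simpl L; auto.
Qed.

Lemma exN_leS (G : Ob C) (b : Hom (cprod G N) Sig) (s : Hom G Sig) :
  leS b (comp s cp1) -> leS (exN o b) s.
Proof. intro H; apply (exd_adj o), (leE_app L); unfold wk; term_simpl L; exact H. Qed.

Lemma leS_exN (G : Ob C) (b : Hom (cprod G N) Sig) (n : Hom G N) :
  leS (comp b (cpair (idm G) n)) (exN o b).
Proof.
  pose proof (leS_comp L (cpair (idm G) n) (leS_exN_wk b)) as H.
  revert H; term_simpl L; auto.
Qed.

Lemma exN_mono (G : Ob C) (b1 b2 : Hom (cprod G N) Sig) :
  leS b1 b2 -> leS (exN o b1) (exN o b2).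
Proof.
  intro H; apply exN_leS; eapply (leS_trans L); [exact H | apply leS_exN_wk].
Qed.

(* For "<=", strength for [sigma |-> exists n. sigma /\ b n]. *)
Lemma meet_exN (G : Ob C) (s : Hom G Sig) (b : Hom (cprod G N) Sig) :
  meetG s (exN o b) = exN o (meetG (comp s cp1) b).
Proof.
  apply (leS_antisym L).
  - pose (F := lam (exN o (meetG (comp cp2 cp1) (comp b (cpair (comp cp1 cp1) cp2))))
               : Hom G (Exp Sig)).
    assert (F_top : app F (topG G) = exN o b).
    { unfold F; term_simpl L; rewrite (top_meet L); reflexivity. }
    assert (F_s : app F s = exN o (meetG (comp s cp1) b)).
    { unfold F; term_simpl L; reflexivity. }
    rewrite <- F_top, <- F_s, <- (phoa_strength L); apply (meet_leS_r L).
  - apply exN_leS; rewrite (meetG_comp L).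
    apply (meet_leS_mono L); [apply (leS_refl L) | apply leS_exN_wk].
Qed.

Lemma exN_join (G : Ob C) (a b : Hom (cprod G N) Sig) :
  exN o (joinG a b) = joinG (exN o a) (exN o b).
Proof.
  apply (leS_antisym L).
  - apply exN_leS; rewrite (joinG_comp L); apply (join_leS_mono L); apply leS_exN_wk.
  - apply (join_leS L); apply exN_mono; [apply (join_leS_l L) | apply (join_leS_r L)].
Qed.

Lemma exN_bot (G : Ob C) : exN o (botG (cprod G N)) = botG G.
Proof.
  apply (leS_antisym L); [| apply (bot_leS L)].
  apply exN_leS; term_simpl L; apply (leS_refl L).
Qed.

End Exists.

Section Lists.
Variable C : CatData.
Hypothesis L : CatLaws C.
Variables (N : Ob C) (o : OvertDiscrete N) (Lst : ListObj N).

Lemma memb_nil (G : Ob C) (n : Hom G N) :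
  comp (memb o Lst) (cpair n (comp (lnil Lst) (bang G))) = botG G.
Proof.
  pose proof (f_equal (fun h => comp h n) (lrec_nil Lst (botG N)
    (joinG (comp (eqd o) (cpair (comp cp1 cp1) (comp cp2 cp1))) cp2))) as H.
  cbv beta in H; unfold memb; revert H; term_simpl L; auto.
Qed.

Lemma memb_cons (G : Ob C) (n m : Hom G N) (l : Hom G (FinN Lst)) :
  comp (memb o Lst) (cpair n (comp (lcons Lst) (cpair m l))) =
  joinG (comp (eqd o) (cpair n m)) (comp (memb o Lst) (cpair n l)).
Proof.
  pose proof (f_equal (fun h => comp h (cpair (cpair n m) l)) (lrec_cons Lst (botG N)
    (joinG (comp (eqd o) (cpair (comp cp1 cp1) (comp cp2 cp1))) cp2))) as H.
  cbv beta in H; unfold memb; revert H; term_simpl L; auto.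
Qed.

Lemma allIn_nil (G : Ob C) (xi : Hom G (Exp N)) :
  comp (allIn Lst) (cpair xi (comp (lnil Lst) (bang G))) = topG G.
Proof.
  pose proof (f_equal (fun h => comp h xi) (lrec_nil Lst (topG (Exp N))
    (meetG (app (comp cp1 cp1) (comp cp2 cp1)) cp2))) as H.
  cbv beta in H; unfold allIn; revert H; term_simpl L; auto.
Qed.

Lemma allIn_cons (G : Ob C) (xi : Hom G (Exp N)) (m : Hom G N) (l : Hom G (FinN Lst)) :
  comp (allIn Lst) (cpair xi (comp (lcons Lst) (cpair m l))) =
  meetG (app xi m) (comp (allIn Lst) (cpair xi l)).
Proof.
  pose proof (f_equal (fun h => comp h (cpair (cpair xi m) l)) (lrec_cons Lst (topG (Exp N))
    (meetG (app (comp cp1 cp1) (comp cp2 cp1)) cp2))) as H.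
  cbv beta in H; unfold allIn; revert H; term_simpl L; auto.
Qed.

End Lists.

Section OnePoint.
Variable M : ASDModel.
Local Notation C := (cat M).
Let L : CatLaws C := cat_laws M.
Variables (N : Ob C) (o : OvertDiscrete N).

Lemma eqd_nucleus (G : Ob C) :
  @nucleus C (cprod G (cprod N N)) (lam (meetG (comp (eqd o) (comp cp2 cp2)) (app cp1 cp2))).
Proof.
  intros D F; unfold wk; term_simpl L; f_equal.
  set (eq_pm := comp (eqd o) (comp cp2 cp2) : Hom (cprod D (cprod G (cprod N N))) Sig).
  pose (H := lam (app (comp F (comp cp1 cp1))
               (lam (meetG (comp cp2 cp1) (app cp2 (comp cp2 (comp cp1 cp1))))))
             : Hom (cprod D (cprod G (cprod N N))) (Exp Sig)).
  assert (H_top : app H (topG _) = app (comp F cp1) (lam (app cp2 (comp cp2 cp1)))).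
  { unfold H; term_simpl L; rewrite (top_meet L); reflexivity. }
  assert (H_eq : app H eq_pm = app (comp F cp1)
      (lam (meetG (comp (eqd o) (comp cp2 (comp cp2 cp1))) (app cp2 (comp cp2 cp1))))).
  { unfold H, eq_pm; term_simpl L; reflexivity. }
  pose proof (phoa_strength L H eq_pm) as S; rewrite H_top, H_eq in S.
  unfold eq_pm in S; symmetry; exact S.
Qed.

Lemma eqd_subst (G : Ob C) (th : Hom (cprod G N) Sig) (p m : Hom G N) :
  meetG (comp (eqd o) (cpair p m)) (comp th (cpair (idm G) p)) =
  meetG (comp (eqd o) (cpair p m)) (comp th (cpair (idm G) m)).
Proof.
  destruct (nucleus_split (eqd_nucleus (G := G))) as [Y [i [I [_ [retract split]]]]].
  set (E := lam (meetG (comp (eqd o) (comp cp2 cp2)) (app cp1 cp2))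
      : Hom (Exp (cprod G (cprod N N))) (Exp (cprod G (cprod N N)))) in *.
  assert (restr_E : forall g : Hom (cprod one (cprod G (cprod N N))) Sig,
      comp (SigMap i) (comp E (lam g)) = comp (SigMap i) (lam g)).
  { intro g; rewrite <- split, <- (comp_assocr L), <- (comp_assocr L), retract, (comp_idl L).
    reflexivity. }
  assert (eq_on_Y : comp (eqd o) (comp cp2 (comp i (cp2 (X := one)))) = topG _).
  { pose proof (restr_E (topG _)) as H; revert H; unfold E, SigMap; term_simpl L.
    intro H; apply (lam_inj L) in H; rewrite (meet_top L) in H; exact H. }
  rewrite <- (pair_eta L (comp cp2 (comp i cp2))) in eq_on_Y.
  apply (eqd_spec o) in eq_on_Y.
  set (g1 := comp th (cpair (comp cp1 cp2) (comp cp1 (comp cp2 cp2)))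
      : Hom (cprod one (cprod G (cprod N N))) Sig).
  set (g2 := comp th (cpair (comp cp1 cp2) (comp cp2 (comp cp2 cp2)))
      : Hom (cprod one (cprod G (cprod N N))) Sig).
  assert (restr_g : comp (SigMap i) (lam g1) = comp (SigMap i) (lam g2)).
  { unfold g1, g2, SigMap; term_simpl L; rewrite eq_on_Y; reflexivity. }
  assert (E_g : comp E (lam g1) = comp E (lam g2)).
  { rewrite <- split, !(comp_assocr L), restr_g; reflexivity. }
  unfold E, g1, g2 in E_g; revert E_g; term_simpl L; intro E_g.
  apply (lam_inj L) in E_g.
  apply (f_equal (fun h => comp h (cpair (bang G) (cpair (idm G) (cpair p m))))) in E_g.
  revert E_g; term_simpl L; auto.
Qed.

Lemma exN_eqd_one_point (G : Ob C) (th : Hom (cprod G N) Sig) (m : Hom G N) :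
  exN o (meetG (comp (eqd o) (cpair cp2 (comp m cp1))) th) = comp th (cpair (idm G) m).
Proof.
  apply (leS_antisym L).
  - apply (exN_leS L).
    pose proof (eqd_subst (comp th (cpair (comp cp1 cp1) cp2)) cp2 (comp m cp1)) as H.
    revert H; term_simpl L; intro H; rewrite H; apply (meet_leS_r L).
  - eapply (leS_trans L); [| apply (leS_exN L)]; term_simpl L.
    assert (m_eq_m : comp (eqd o) (cpair m m) = topG G) by (apply (eqd_spec o); reflexivity).
    rewrite m_eq_m, (top_meet L); apply (leS_refl L).
Qed.

End OnePoint.

(* [joinE = pointwise sjoin] and [meetE = pointwise smeet] hold by conversion. *)
Definition pointwise {C : CatData} {G X : Ob C} (op : Hom (cprod Sig Sig) Sig)
  (f g : Hom G (Exp X)) : Hom G (Exp X) :=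
  lam (comp op (cpair (app (wk f) cp2) (app (wk g) cp2))).

Lemma A_const (C : CatData) (L : CatLaws C) (X N : Ob C)
  (beta : Hom N (Exp X)) (A : Hom N (Exp (Exp X))) (c : Hom one Sig) (u : Hom one N) :
  comp beta u = lam (comp c (bang (cprod one X))) ->
  forall (G : Ob C) (n : Hom G N),
    Aapp A n (lam (comp c (bang (cprod G X)))) = wb beta A n (comp u (bang G)).
Proof.
  intros beta_u G n; unfold wb, Aapp.
  rewrite (comp_assoc L), beta_u; term_simpl L; reflexivity.
Qed.

Section BasisExpansion.
Variable M : ASDModel.
Local Notation C := (cat M).
Let L : CatLaws C := cat_laws M.
Variables (X N : Ob C) (o : OvertDiscrete N)
  (beta : Hom N (Exp X)) (A : Hom N (Exp (Exp X))) (z : Hom one N) (pl : Hom (cprod N N) N).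
Hypotheses (eb : effective_basis o beta A)
  (beta_z : comp beta z = botE one X) (A_z : comp A z = topE one (Exp X))
  (beta_pl : forall (G : Ob C) (n m : Hom G N),
      comp beta (comp pl (cpair n m)) = joinE (comp beta n) (comp beta m))
  (A_pl : forall (G : Ob C) (n m : Hom G N),
      comp A (comp pl (cpair n m)) = meetE (comp A n) (comp A m)).

Section ListSum.
Variable Lst : ListObj N.

Definition lsum : Hom (cprod one (FinN Lst)) N :=
  lrec Lst (G := one) z (comp pl (cpair (comp cp2 cp1) cp2)).

Lemma lsum_nil (G : Ob C) :
  comp lsum (cpair (bang G) (comp (lnil Lst) (bang G))) = comp z (bang G).
Proof.
  pose proof (f_equal (fun h => comp h (bang G))
    (lrec_nil Lst z (comp pl (cpair (comp cp2 cp1) cp2)))) as H.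
  cbv beta in H; unfold lsum; revert H; term_simpl L; auto.
Qed.

Lemma lsum_cons (G : Ob C) (m : Hom G N) (l : Hom G (FinN Lst)) :
  comp lsum (cpair (bang G) (comp (lcons Lst) (cpair m l))) =
  comp pl (cpair m (comp lsum (cpair (bang G) l))).
Proof.
  pose proof (f_equal (fun h => comp h (cpair (cpair (bang G) m) l))
    (lrec_cons Lst z (comp pl (cpair (comp cp2 cp1) cp2)))) as H.
  cbv beta in H; unfold lsum; revert H; term_simpl L; auto.
Qed.

Lemma exN_memb_beta (G : Ob C) (l : Hom G (FinN Lst)) (x : Hom G X) :
  exN o (meetG (comp (memb o Lst) (cpair cp2 (comp l cp1))) (app (comp beta cp2) (comp x cp1)))
  = app (comp beta (comp lsum (cpair (bang G) l))) x.
Proof.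
  assert (generic : exN o (meetG (comp (memb o Lst) (cpair cp2 (comp cp2 cp1)))
                 (app (comp beta cp2) (comp cp1 cp1)))
    = app (comp beta (comp lsum (cpair (bang _) cp2))) (cp1 (X := X) (Y := FinN Lst))).
  { set (h := joinG (app (comp beta (comp cp2 cp1)) (comp cp1 cp1)) cp2
              : Hom (cprod (cprod X N) Sig) Sig).
    transitivity (lrec Lst (botG X) h); [| symmetry]; apply lrec_uniq.
    - term_simpl L; rewrite (memb_nil L), (bot_meet L); apply (exN_bot L).
    - unfold h; term_simpl L.
      rewrite (memb_cons L), (meet_join_distr_r L), (exN_join L).
      pose proof (exN_eqd_one_point o (app (comp beta cp2) (comp cp1 (comp cp1 cp1)))
                    (comp cp2 (cp1 (X := cprod X N) (Y := FinN Lst)))) as E.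
      revert E; term_simpl L; intro E; rewrite E; reflexivity.
    - term_simpl L; rewrite lsum_nil, <- (comp_assocr L), beta_z.
      unfold botE; term_simpl L; reflexivity.
    - unfold h; term_simpl L; rewrite lsum_cons, beta_pl.
      unfold joinE, wk; term_simpl L; reflexivity. }
  pose proof (f_equal (fun h => comp h (cpair x l)) generic) as H.
  cbv beta in H; revert H; term_simpl L; auto.
Qed.

Lemma allIn_A (G : Ob C) (phi : Hom G (Exp X)) (l : Hom G (FinN Lst)) :
  comp (allIn Lst) (cpair (lam (app (comp A cp2) (comp phi cp1))) l)
  = app (comp A (comp lsum (cpair (bang G) l))) phi.
Proof.
  assert (generic : comp (allIn Lst) (cpair (lam (app (comp A cp2) (comp cp1 cp1))) cp2)
    = app (comp A (comp lsum (cpair (bang _) cp2))) (cp1 (X := Exp X) (Y := FinN Lst))).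
  { set (h := meetG (app (comp A (comp cp2 cp1)) (comp cp1 cp1)) cp2
              : Hom (cprod (cprod (Exp X) N) Sig) Sig).
    transitivity (lrec Lst (topG (Exp X)) h); [| symmetry]; apply lrec_uniq.
    - term_simpl L; rewrite (allIn_nil L); reflexivity.
    - unfold h; term_simpl L; rewrite (allIn_cons L); term_simpl L; reflexivity.
    - term_simpl L; rewrite lsum_nil, <- (comp_assocr L), A_z.
      unfold topE; term_simpl L; reflexivity.
    - unfold h; term_simpl L; rewrite lsum_cons, A_pl.
      unfold meetE, wk; term_simpl L; reflexivity. }
  pose proof (f_equal (fun h => comp h (cpair phi l)) generic) as H.
  cbv beta in H; revert H; term_simpl L; auto.
Qed.

End ListSum.

Lemma A_beta_leS (G : Ob C) (phi : Hom G (Exp X)) (n : Hom G N) (x : Hom G X) :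
  leS (meetG (app (comp A n) phi) (app (comp beta n) x)) (app phi x).
Proof.
  pose proof (f_equal (fun f => app f x) (eb phi)) as H; cbv beta in H.
  revert H; term_simpl L; intro H; rewrite H.
  eapply (leS_trans L); [| apply (leS_exN L) with (n := n)].
  term_simpl L; apply (leS_refl L).
Qed.

Lemma basis_expansion (G : Ob C) (Phi : Hom G (Exp (Exp X))) (phi : Hom G (Exp X)) :
  app Phi phi =
  exN o (meetG (app (comp Phi cp1) (comp beta cp2)) (app (comp A cp2) (comp phi cp1))).
Proof.
  apply (leS_antisym L).
  - set (Psi := lam (app (comp Phi cp1)
          (lam (exN o (meetG (app (comp cp2 (comp cp1 cp1)) cp2)
                             (app (comp beta cp2) (comp cp2 cp1))))))
        : Hom G (Exp (Exp N))).
    set (xi := lam (app (comp A cp2) (comp phi cp1)) : Hom G (Exp N)).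
    assert (Psi_xi : app Psi xi = app Phi phi).
    { unfold Psi, xi; term_simpl L; rewrite <- (eb phi); reflexivity. }
    rewrite <- Psi_xi, (scott o Psi xi).
    apply (exN_leS L); unfold wk, Psi, xi; term_simpl L.
    pose proof (exN_memb_beta (comp cp2 cp1) (cp2 (X := cprod G (FinN (fin o))) (Y := X)))
      as memb_l.
    revert memb_l; term_simpl L; intro memb_l; rewrite memb_l.
    pose proof (allIn_A (comp phi cp1) (cp2 (X := G) (Y := FinN (fin o)))) as allIn_l.
    revert allIn_l; term_simpl L; intro allIn_l; rewrite allIn_l.
    assert (beta_sum : lam (app (comp beta (comp (lsum (fin o)) (cpair (bang _) (comp cp2 cp1)))) cp2)
      = comp beta (comp (lsum (fin o)) (cpair (bang (cprod G (FinN (fin o)))) cp2))).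
    { rewrite <- (lam_app_eta L (comp beta (comp (lsum (fin o)) (cpair (bang _) cp2)))).
      term_simpl L; reflexivity. }
    rewrite beta_sum.
    eapply (leS_trans L);
      [| apply (leS_exN L) with (n := comp (lsum (fin o)) (cpair (bang _) cp2))].
    term_simpl L; apply (leS_refl L).
  - apply (exN_leS L); term_simpl L; rewrite (meet_comm L).
    eapply (leS_trans L); [apply (meet_app_leS L) |].
    apply (app_mono L), (leE_app L); term_simpl L; apply A_beta_leS.
Qed.

Lemma A_pointwise (op : Hom (cprod Sig Sig) Sig) (k : Hom (cprod N N) N)
  (beta_k : forall (G : Ob C) (n m : Hom G N),
      comp beta (comp k (cpair n m)) = pointwise op (comp beta n) (comp beta m))
  (G : Ob C) (n : Hom G N) (phi psi : Hom G (Exp X)) :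
  Aapp A n (pointwise op phi psi) =
  exN o (exN o
    (meetG (wb beta A (comp n (comp cp1 cp1)) (comp k (cpair (comp cp2 cp1) cp2)))
      (meetG (Aapp A (comp cp2 cp1) (comp phi (comp cp1 cp1)))
             (Aapp A cp2 (comp psi (comp cp1 cp1)))))).
Proof.
  set (Phi := lam (app (comp A (comp n cp1)) (pointwise op cp2 (comp psi cp1)))
        : Hom G (Exp (Exp X))).
  assert (expand_phi : Aapp A n (pointwise op phi psi) = app Phi phi).
  { unfold Phi, Aapp, pointwise, wk; term_simpl L; reflexivity. }
  rewrite expand_phi, (basis_expansion Phi phi).
  set (Phi2 := lam (app (comp A (comp n (comp cp1 cp1)))
                        (pointwise op (comp beta (comp cp2 cp1)) cp2))
        : Hom (cprod G N) (Exp (Exp X))).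
  assert (expand_psi : app (comp Phi cp1) (comp beta cp2) = app Phi2 (comp psi cp1)).
  { unfold Phi, Phi2, pointwise, wk; term_simpl L; reflexivity. }
  rewrite expand_psi, (basis_expansion Phi2 (comp psi cp1)).
  assert (beta_pq : app (comp Phi2 cp1) (comp beta cp2) =
      wb beta A (comp n (comp cp1 cp1)) (comp k (cpair (comp cp2 cp1) cp2))).
  { unfold Phi2, wb, Aapp; rewrite beta_k; unfold pointwise, wk; term_simpl L.
    reflexivity. }
  rewrite beta_pq, (meet_comm L), (meet_exN L); f_equal; f_equal; unfold Aapp.
  term_simpl L.
  rewrite (meet_assoc L), (meet_comm L _ (wb _ _ _ _)), <- (meet_assoc L); reflexivity.
Qed.

End BasisExpansion.

Unset Implicit Arguments.
Set Strict Implicit.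

Theorem lemma11p8 (M : ASDModel) (X N : Ob (cat M)) (o : OvertDiscrete N)
  (beta : Hom N (Exp X)) (A : Hom N (Exp (Exp X)))
  (z : Hom one N) (pl : Hom (cprod N N) N) (u : Hom one N) (st : Hom (cprod N N) N) :
  lattice_basis o beta A z pl u st ->
  (forall (G : Ob (cat M)) (n : Hom G N) (phi psi : Hom G (Exp X)),
     Aapp A n (topE G X) = wb beta A n (comp u (bang G)) /\
     Aapp A n (botE G X) = wb beta A n (comp z (bang G)) /\
     Aapp A n (meetE phi psi) =
       exN o (exN o
         (meetG (wb beta A (comp n (comp cp1 cp1)) (comp st (cpair (comp cp2 cp1) cp2)))
           (meetG (Aapp A (comp cp2 cp1) (comp phi (comp cp1 cp1)))
                  (Aapp A cp2 (comp psi (comp cp1 cp1)))))) /\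
     Aapp A n (joinE phi psi) =
       exN o (exN o
         (meetG (wb beta A (comp n (comp cp1 cp1)) (comp pl (cpair (comp cp2 cp1) cp2)))
           (meetG (Aapp A (comp cp2 cp1) (comp phi (comp cp1 cp1)))
                  (Aapp A cp2 (comp psi (comp cp1 cp1))))))) /\
  (forall (G : Ob (cat M)) (n p q : Hom G N),
     wb beta A n (comp pl (cpair p q)) =
       exN o (exN o
         (meetG (wb beta A (comp n (comp cp1 cp1)) (comp pl (cpair (comp cp2 cp1) cp2)))
           (meetG (wb beta A (comp cp2 cp1) (comp p (comp cp1 cp1)))
                  (wb beta A cp2 (comp q (comp cp1 cp1))))))).
Proof.
  intros [[eb [beta_z [A_z [beta_pl A_pl]]]] [_ [beta_u [beta_st _]]]].
  pose proof (A_pointwise eb beta_z A_z beta_pl A_pl (op := sjoin) (k := pl) beta_pl) as A_join.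
  pose proof (A_pointwise eb beta_z A_z beta_pl A_pl (op := smeet) (k := st) beta_st) as A_meet.
  split.
  - intros G n phi psi; split; [| split; [| split]].
    + exact (A_const (cat_laws M) A (c := stop) beta_u n).
    + exact (A_const (cat_laws M) A (c := sbot) beta_z n).
    + apply A_meet.
    + apply A_join.
  - intros G n p q.
    unfold wb at 1; rewrite beta_pl.
    etransitivity; [exact (A_join G n (comp beta p) (comp beta q)) |].
    unfold wb; rewrite !(comp_assocr (cat_laws M)); reflexivity.
Qed.
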